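(* Let $F(x) = A\cos(px) + B\cos(qx)$ be a non-zero function, where $A, B \in \mathbb{R}$, $p$ and $q$ are coprime positive integers and $p + q$ is odd. Then \[ \min(\rho_+(F), \rho_-(F)) \geq \frac{1}{2} - \frac{1}{2(p+q)}. \]
   Context: For a continuous periodic function $F\colon \mathbb{R} \to \mathbb{R}$ with period $P > 0$, $\rho_+(F) = \lambda(\{x \in [0,P] : F(x) > 0\})/P$ and $\rho_-(F) = \lambda(\{x \in [0,P] : F(x) < 0\})/P$, where $\lambda$ is Lebesgue measure (independent of the choice of period). *)

From HB Require Import structures.
From mathcomp Require Import all_boot all_order all_algebra.
From mathcomp Require Import all_classical all_reals all_analysis.
Set Implicit Arguments. Unset Strict Implicit. Unset Printing Implicit Defensive.
Import Order.TTheory GRing.Theory Num.Theory.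
Local Open Scope classical_set_scope.
Local Open Scope ring_scope.

Definition rho_plus (R : realType) (F : R -> R) (P : R) : \bar R :=
  (lebesgue_measure ([set x : R | (0 <= x <= P)%R] `&` [set x | (0 < F x)%R]) * (P^-1)%:E)%E.

Definition rho_minus (R : realType) (F : R -> R) (P : R) : \bar R :=
  (lebesgue_measure ([set x : R | (0 <= x <= P)%R] `&` [set x | (F x < 0)%R]) * (P^-1)%:E)%E.

From HB Require Import structures.
From mathcomp Require Import all_boot all_order all_algebra.
From mathcomp Require Import all_classical all_reals all_analysis.
From mathcomp Require Import measurable_realfun ring lra.
Import Order.TTheory GRing.Theory Num.Theory.
Local Open Scope classical_set_scope.
Local Open Scope ring_scope.

(* Put N = p + q = 2k + 1, h = 2 pi / N and G x = A sin (p x) - B sin (q x).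
   Since q = -p modulo N, translating x by m h rotates the vector (F x, G x) by
   the angle 2 pi p m / N, so F (x + m h) = r cos (2 pi (p m mod N) / N + phi)
   in polar coordinates (r, phi) of (F x, G x).  As m |-> p m mod N permutes
   Z/N, and an open half circle contains at least k of N equally spaced
   points, at least k of the values F (x + m h), m < N, are positive.  This
   needs (F x, G x) <> 0, which holds for every x in ]0, h[ except pi / N,
   because A sin (N x) and B sin (N x) are linear combinations of F x and G x.
   Averaging over the N translates of ]0, h[ gives lambda {F > 0} >= k h on
   [0, 2 pi], i.e. rho_+(F) >= k / N; the same bound for -F gives
   rho_-(F) >= k / N. *)

Lemma natr_odd {R : pzSemiRingType} (N : nat) :
  odd N -> N%:R = 2 * N./2%:R + 1 :> R.
Proof.
move=> oN; rewrite -[in LHS](odd_double_half N) oN natrD -addnn natrD.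
by rewrite mulr_natl mulr2n addrC.
Qed.

Section trigonometry.
Context {R : realType}.

Lemma cosD2pin (x : R) (n : nat) : cos (x + 2 * pi * n%:R) = cos x.
Proof. by rewrite mulr_natr mulr_natl; apply: periodicn; exact: cosD2pi. Qed.

Lemma cosD2piz (x : R) (z : int) : cos (x + 2 * pi * z%:~R) = cos x.
Proof.
case: z => n; first by rewrite -pmulrn cosD2pin.
by rewrite NegzE mulrNz -pmulrn mulrN -(cosD2pin _ n.+1) subrK.
Qed.

Lemma cos_modz (N : nat) (u : int) (phi : R) : (0 < N)%N ->
  cos (2 * pi * (u %% N)%Z%:~R / N%:R + phi) = cos (2 * pi * u%:~R / N%:R + phi).
Proof.
move=> N0; rewrite [in RHS](divz_eq u N) [in RHS]intrD [in RHS]intrM.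
rewrite -[(N : int)%:~R]/(N%:R).
have NR0 : N%:R != 0 :> R by rewrite pnatr_eq0 -lt0n.
by rewrite -(cosD2piz _ (u %/ N)%Z); congr cos; field.
Qed.

Lemma card_cos_gt0 (N : nat) (phi : R) : odd N ->
  (N./2 <= #|[set r : 'I_N | (0 < cos (2 * pi * r%:R / N%:R + phi))%R]%SET|)%N.
Proof.
move=> oN; set k := N./2.
have kN : (k < N)%N by rewrite -[N in (_ < N)%N]odd_double_half oN -addnn ltnS leq_addr.
have N0 : (0 < N)%N := leq_ltn_trans (leq0n k) kN.
have NR0 : 0 < N%:R :> R by rewrite ltr0n.
have NZ0 : N%:Z != 0 by rewrite gt_eqF ?ltz_nat.
have NRk : N%:R = 2 * k%:R + 1 :> R := natr_odd _ oN.
have pi0 := @pi_gt0 R.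
have [t ->] : exists t, phi = 2 * pi * t.
  by exists (phi / (2 * pi)); rewrite mulrC divfK // gt_eqF ?mulr_gt0.
(* The angle of an integer u is 2 pi (u - s) / N - pi / 2 modulo 2 pi, so the
   k integers just above s have their angles in ]-pi/2, pi/2[. *)
set s : R := - t * N%:R - N%:R / 4.
set z := Num.floor s.
have /andP[zs sz] : z%:~R <= s < (z + 1)%:~R by exact: floor_itv.
pose u (i : nat) : int := z + 1 + i%:Z.
have uN i : (`|(u i %% N)%Z| < N)%N.
  by rewrite -ltz_nat gez0_abs ?modz_ge0 ?ltz_pmod ?ltz_nat.
pose g (i : 'I_k) : 'I_N := Ordinal (uN i).
have g_inj : injective g.
  move=> i j /(congr1 (fun r : 'I_N => (r : nat)%:Z)) /=.
  rewrite !gez0_abs ?modz_ge0 // => /eqP; rewrite eqz_modDl.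
  have lt_kN (l : 'I_k) : (0 <= l%:Z < N)%R by rewrite ltz_nat (ltn_trans _ kN).
  by rewrite !modz_small // => /eqP [] /val_inj.
have g_pos i : 0 < cos (2 * pi * (g i)%:R / N%:R + 2 * pi * t).
  rewrite /= natr_absz ger0_norm ?modz_ge0 // cos_modz //.
  have -> : 2 * pi * (u i)%:~R / N%:R + 2 * pi * t =
      2 * pi * ((u i)%:~R - s) / N%:R - pi / 2.
    by rewrite /s; field; rewrite gt_eqF.
  have ik : (i : nat)%:R + 1 <= k%:R :> R by rewrite natr1 ler_nat ltn_ord.
  have [uis0 uisk] : 0 < (u i)%:~R - s /\ (u i)%:~R - s < N%:R / 2.
    have i0 : 0 <= (i : nat)%:R :> R := ler0n _ _.
    by move: sz zs; rewrite /u !intrD mulr1z -[(i : int)%:~R]/(i%:R) NRk; lra.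
  have b0 : 0 < ((u i)%:~R - s) / N%:R by rewrite divr_gt0.
  have b1 : ((u i)%:~R - s) / N%:R < 1 / 2 by rewrite ltr_pdivrMr //; lra.
  by rewrite -mulrA; apply: cos_gt0_pihalf; apply/andP; split; nra.
rewrite -[X in (X <= _)%N]card_ord -cardsT -(card_imset [set: 'I_k]%SET g_inj).
apply: subset_leq_card; apply/fintype.subsetP => _ /imsetP[i _ ->].
by rewrite finset.inE; exact: g_pos.
Qed.

Lemma polar_coord (a b : R) : (a != 0) || (b != 0) ->
  exists r phi, 0 < r /\ a = r * cos phi /\ b = r * sin phi.
Proof.
move=> ab0.
have s0 : 0 < a ^+ 2 + b ^+ 2.
  by rewrite lt0r paddr_eq0 ?sqr_ge0 // !sqrf_eq0 negb_and ab0 addr_ge0 ?sqr_ge0.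
set r := Num.sqrt (a ^+ 2 + b ^+ 2).
have r0 : 0 < r by rewrite sqrtr_gt0.
have r2 : r ^+ 2 = a ^+ 2 + b ^+ 2 by rewrite sqr_sqrtr // ltW.
set c := a / r.
have c2 : 1 - c ^+ 2 = (b / r) ^+ 2.
  have rr : r ^+ 2 != 0 by rewrite expf_neq0 // gt_eqF.
  by rewrite /c !expr_div_n -(divff rr) {1}r2; field; rewrite gt_eqF.
have c1 : -1 <= c <= 1.
  by have := sqr_ge0 (b / r); rewrite -c2 => ?; apply/andP; split; nra.
have cosc : cos (acos c) = c by apply: acosK; rewrite in_itv.
have sinc : sin (acos c) = `|b| / r.
  by rewrite sin_acos // c2 sqrtr_sqr normf_div (gtr0_norm r0).
exists r; case: (leP 0 b) => b0.
  exists (acos c); rewrite cosc sinc (ger0_norm b0) /c.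
  by split => //; split; rewrite mulrC divfK // gt_eqF.
exists (- acos c); rewrite cosN sinN cosc sinc (ltr0_norm b0) /c.
by split => //; split; rewrite ?mulrN mulrC divfK ?opprK // gt_eqF.
Qed.

Lemma sin_neq0 (y : R) : 0 < y < 2 * pi -> y != pi -> sin y != 0.
Proof.
move=> /andP[y0 y2pi]; case: ltgtP => // [ypi|piy] _.
  by rewrite gt_eqF // sin_gt0_pi // y0.
rewrite -[y](subrK pi) sinDpi oppr_eq0 gt_eqF // sin_gt0_pi //.
by apply/andP; split; lra.
Qed.

End trigonometry.

Lemma mulnI_mod (N p a b : nat) : coprime N p -> (a < N)%N -> (b < N)%N ->
  p * a = p * b %[mod N] -> a = b.
Proof.
move=> cNp; wlog ab : a b / (a <= b)%N => [wlog_ab aN bN eab|aN bN /eqP].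
  by case: (leqP a b) => [|/ltnW] ?; [|apply/esym]; apply: wlog_ab => //; rewrite eab.
rewrite eq_sym eqn_mod_dvd ?leq_mul2l ?ab ?orbT // -mulnBr Gauss_dvdr //.
have : (b - a < N)%N by rewrite (leq_ltn_trans (leq_subr _ _)).
case: (posnP (b - a)) => [|ba0 baN /(dvdn_leq ba0)]; last by rewrite leqNgt baN.
by move/eqP; rewrite subn_eq0 => ba _ _; apply/eqP; rewrite eqn_leq ab ba.
Qed.

Section multiplicity.
Context {d} {X : measurableType d} {R : realType} (mu : {measure set X -> \bar R}).

Lemma multiplicity_le_sum_measure (D : set X) (N k : nat) (T : 'I_N -> set X) :
    measurable D -> (forall m, measurable (T m)) ->
    (forall x, D x -> (k <= #|[set m | x \in T m]%SET|)%N) ->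
  (k%:R%:E * mu D <= \sum_(m < N) mu (T m `&` D))%E.
Proof.
move=> mD mT multD.
under eq_bigr do rewrite -integral_indic //.
rewrite -ge0_integral_sum // -?integral_cst //; last first.
  by move=> m; exact/measurable_EFinP/measurable_indic.
apply: ge0_le_integral => //.
- by move=> x _; rewrite lee_fin.
- by apply: emeasurable_sum => m; exact/measurable_EFinP/measurable_indic.
- move=> x Dx; rewrite sumEFin lee_fin /=.
  under eq_bigr do rewrite indicE.
  rewrite -natr_sum ler_nat (leq_trans (multD x Dx)) // -sum1_card big_mkcond /=.
  by apply: leq_sum => m _; rewrite finset.inE; case: (x \in T m).
Qed.

End multiplicity.

Section translation.
Context {R : realType}.
Local Notation mu := (@lebesgue_measure R).

Lemma measurable_addr (c : R) : measurable_fun setT (fun y : R => y + c).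
Proof. by apply: measurable_funD => //; exact: measurable_cst. Qed.

Lemma lebesgue_measure_shift (c : R) (A : set R) : measurable A ->
  mu ((fun y => y + c) @^-1` A) = mu A.
Proof.
move=> mA; apply/esym; apply: (@lebesgue_measure_unique R
  (pushforward mu ((fun y => y + c) : _ -> measurableTypeR R))) => //.
- exact: measurable_addr.
- move=> ? _ [[a b] _ <-].
  change (mu `]a, b]%classic = mu ((fun y => y + c) @^-1` `]a, b]%classic)).
  have -> : (fun y => y + c) @^-1` `]a, b]%classic = `]a - c, b - c]%classic.
    by apply/seteqP; split => y; rewrite /= !in_itv /= lerBrDr ltrBlDr.
  rewrite !lebesgue_measure_itv /= !lte_fin ltrD2r -!EFinD.
  by congr (if _ then _%:E else _); ring.
Qed.

Lemma lebesgue_measure_itvD1 (a b c : R) : a <= b ->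
  mu (`]a, b[%classic `\ c) = (b - a)%:E.
Proof.
move=> ab; have mI : measurable (`]a, b[%classic : set R) by exact: measurable_itv.
have m1 : measurable [set c] by exact: measurable_set1.
have mu1 : mu [set c] = 0%E by exact: lebesgue_measure_set1.
rewrite -(measureU0 (mu := mu) (measurableD mI m1) m1 mu1) setUDl setDv setD0.
rewrite (measureU0 (mu := mu) mI m1 mu1).
change (mu `]a, b[%classic = (b - a)%:E); rewrite lebesgue_measure_itv /= lte_fin.
have [_|ba] := ltP a b; first by rewrite -EFinD.
have -> : a = b by apply/eqP; rewrite eq_le ab ba.
by rewrite subrr.
Qed.

Lemma sum_measure_translates_le (P : set R) (h : R) (N : nat) :
    0 < h -> measurable P ->
  (\sum_(m < N) mu ((fun y => y + m%:R * h)%R @^-1` P `&` `[0%R, h[%classic)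
     <= mu ([set x | (0 <= x <= N%:R * h)%R] `&` P))%E.
Proof.
move=> h0 mP.
pose S (m : nat) := `[m%:R * h, m%:R * h + h[%classic `&` P.
have mS m : measurable (S m) by apply: measurableI => //; exact: measurable_itv.
have lt_mh (i j : nat) : (i < j)%N -> i%:R * h + h <= j%:R * h.
  by move=> ij; rewrite -{2}[h]mul1r -mulrDl natr1 ler_pM2r // ler_nat.
have -> : \sum_(m < N) mu ((fun y => y + m%:R * h) @^-1` P `&` `[0, h[) =
    \sum_(m < N) mu (S m).
  apply: eq_bigr => m _; rewrite -[in RHS](lebesgue_measure_shift (m%:R * h)) //.
  congr mu; apply/seteqP; split => y; rewrite /S /= !in_itv /=.
    by move=> [Py /andP[y0 yh]]; split => //; apply/andP; split; lra.
  by move=> [/andP[y0 yh] Py]; split => //; apply/andP; split; lra.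
have S_triv : trivIset setT (fun m : 'I_N => S m).
  apply/trivIsetP => i j _ _ ij; apply/seteqP; split => // y [[+ _] [+ _]].
  rewrite /= !in_itv /= => /andP[iy yi] /andP[jy yj].
  case: (ltngtP i j) => [lij|lji|/val_inj eij]; last by rewrite eij eqxx in ij.
  + by have := lt_mh _ _ lij; lra.
  + by have := lt_mh _ _ lji; lra.
have mUS : measurable (\big[setU/set0]_(m < N) S m).
  by apply: bigsetU_measurable => m _; exact: mS.
rewrite -(measure_semi_additive_ord mu (fun m : 'I_N => mS m) S_triv mUS).
apply: le_measure; rewrite ?inE //.
  apply: measurableI => //.
  rewrite (_ : [set x | _] = `[0, N%:R * h]%classic); first exact: measurable_itv.
  by apply/seteqP; split => y; rewrite /= in_itv.
move=> y; rewrite -bigcup_mkord => -[m /= mN [+ Py]].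
rewrite /= in_itv /= => /andP[my ymh]; split => //.
have mhN := lt_mh _ _ mN.
have mh0 : 0 <= m%:R * h by rewrite mulr_ge0 // ltW.
by apply/andP; split; lra.
Qed.

End translation.

Lemma rho_minusE {R : realType} (F : R -> R) (P : R) :
  rho_minus F P = rho_plus (fun x => - F x) P.
Proof.
rewrite /rho_minus /rho_plus; congr (lebesgue_measure (_ `&` _) * _)%E.
by apply/seteqP; split => x; rewrite /= oppr_gt0.
Qed.

Section two_frequencies.
Context {R : realType} (A B : R) (p q : nat).
Local Notation mu := (@lebesgue_measure R).

Definition Fpq (x : R) := A * cos (p%:R * x) + B * cos (q%:R * x).
Definition Gpq (x : R) := A * sin (p%:R * x) - B * sin (q%:R * x).

Lemma Fpq_shift (m : nat) (x : R) : (0 < p + q)%N ->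
  let theta := 2 * pi * (p * m)%:R / (p + q)%:R in
  Fpq (x + m%:R * (2 * pi / (p + q)%:R)) = Fpq x * cos theta - Gpq x * sin theta.
Proof.
move=> N0 theta; have NR0 : p%:R + q%:R != 0 :> R by rewrite -natrD pnatr_eq0 -lt0n.
have ptheta : p%:R * (x + m%:R * (2 * pi / (p + q)%:R)) = p%:R * x + theta.
  by rewrite /theta natrM natrD; field.
have qtheta : q%:R * (x + m%:R * (2 * pi / (p + q)%:R)) =
    (q%:R * x - theta) + 2 * pi * m%:R.
  by rewrite /theta natrM natrD; field.
rewrite /Fpq /Gpq ptheta qtheta cosD2pin cosD cosB; ring.
Qed.

Lemma Fpq_Gpq_eq0 (x : R) : sin ((p + q)%:R * x) != 0 ->
  Fpq x = 0 -> Gpq x = 0 -> A = 0 /\ B = 0.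
Proof.
move=> sN0 F0 G0.
have eA : A * sin ((p + q)%:R * x) = cos (q%:R * x) * Gpq x + sin (q%:R * x) * Fpq x.
  by rewrite /Fpq /Gpq natrD mulrDl sinD; ring.
have eB : B * sin ((p + q)%:R * x) = - cos (p%:R * x) * Gpq x + sin (p%:R * x) * Fpq x.
  by rewrite /Fpq /Gpq natrD mulrDl sinD; ring.
move: eA eB; rewrite F0 G0 !mulr0 addr0 => /eqP + /eqP.
by rewrite !mulf_eq0 (negPf sN0) !orbF => /eqP -> /eqP ->.
Qed.

Lemma card_Fpq_shift_gt0 (x : R) : odd (p + q) -> coprime p q ->
    (Fpq x != 0) || (Gpq x != 0) ->
  ((p + q)./2 <= #|[set m : 'I_(p + q) |
     (0 < Fpq (x + m%:R * (2 * pi / (p + q)%:R)))%R]%SET|)%N.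
Proof.
set N := (p + q)%N => oN cpq /polar_coord [r [phi [r0 [Fx Gx]]]].
have N0 : (0 < N)%N by rewrite odd_gt0.
pose mulp (m : 'I_N) : 'I_N := Ordinal (ltn_pmod (p * m) N0).
have mulp_inj : injective mulp.
  have cNp : coprime N p by rewrite coprime_sym /coprime /N gcdnDl.
  move=> a b /(congr1 val) /= eab; apply: val_inj.
  exact: mulnI_mod cNp (ltn_ord a) (ltn_ord b) eab.
have Fshift (m : 'I_N) : Fpq (x + m%:R * (2 * pi / N%:R)) =
    r * cos (2 * pi * (mulp m)%:R / N%:R + phi).
  have := @cos_modz R N (p * m)%:Z phi N0; rewrite modz_nat -!pmulrn /= => ->.
  by rewrite Fpq_shift // Fx Gx cosD; ring.
apply: leq_trans (card_cos_gt0 _ phi oN) _.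
rewrite -(card_preimset _ mulp_inj); apply: subset_leq_card.
by apply/fintype.subsetP => m; rewrite !finset.inE Fshift pmulr_rgt0.
Qed.

Lemma measurable_Fpq_gt0 : measurable [set x | 0 < Fpq x].
Proof.
have mcos (n : nat) : measurable_fun setT (fun x : R => cos (n%:R * x)).
  apply: measurableT_comp (continuous_measurable_fun (@continuous_cos R)) _.
  by apply: measurable_funM => //; exact: measurable_cst.
have mF : measurable_fun setT Fpq.
  by apply: measurable_funD; apply: measurable_funM => //; exact: measurable_cst.
rewrite (_ : [set x | _] = Fpq @^-1` `]0, +oo[%classic).
  by rewrite -[_ @^-1` _]setTI; apply: mF => //; exact: measurable_itv.
by apply/seteqP; split => x; rewrite /= in_itv /= andbT.
Qed.

Lemma rho_plus_Fpq_ge : odd (p + q) -> coprime p q -> (A != 0) || (B != 0) ->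
  ((1 / 2 - 1 / (2 * (p + q)%:R))%:E <= rho_plus Fpq (2 * pi))%E.
Proof.
set N := (p + q)%N => oN cpq AB0.
have NR0 : 0 < N%:R :> R by rewrite ltr0n odd_gt0.
have pi0 := @pi_gt0 R.
set h : R := 2 * pi / N%:R.
have h0 : 0 < h by rewrite divr_gt0 ?mulr_gt0.
have Nh : N%:R * h = 2 * pi by rewrite mulrC divfK ?gt_eqF.
set P := [set x | 0 < Fpq x].
pose T (m : 'I_N) := (fun y => y + m%:R * h) @^-1` P.
have mT m : measurable (T m).
  by rewrite -[T m]setTI; apply: measurable_addr => //; exact: measurable_Fpq_gt0.
set D : set R := `]0, h[%classic `\ (pi / N%:R).
have mD : measurable D.
  by apply: measurableD; [exact: measurable_itv | exact: measurable_set1].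
have muD : mu D = h%:E by rewrite lebesgue_measure_itvD1 ?subr0 // ltW.
have multD x : D x -> (N./2 <= #|[set m | x \in T m]%SET|)%N.
  move=> [/=]; rewrite in_itv /= => /andP[x0 xh] xpi.
  have sN : sin (N%:R * x) != 0.
    apply: sin_neq0; last by apply/eqP => Nx; apply: xpi; rewrite /= -Nx mulrC mulKf ?gt_eqF.
    by rewrite mulr_gt0 //= -Nh ltr_pM2l.
  have FG : (Fpq x != 0) || (Gpq x != 0).
    apply: contraTT AB0; rewrite negb_or !negbK => /andP[/eqP F0 /eqP G0].
    by have [-> ->] := Fpq_Gpq_eq0 x sN F0 G0; rewrite eqxx.
  apply: leq_trans (card_Fpq_shift_gt0 x oN cpq FG) _.
  by apply: subset_leq_card; apply/fintype.subsetP => m; rewrite !finset.inE inE.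
have le_mu : ((N./2%:R * h)%:E <= mu ([set x | (0 <= x <= 2 * pi)%R] `&` P))%E.
  rewrite -Nh EFinM -muD.
  apply: le_trans (multiplicity_le_sum_measure mu _ _ _ _ mD mT multD) _.
  apply: le_trans (sum_measure_translates_le P h N h0 measurable_Fpq_gt0).
  apply: lee_sum => m _; apply: le_measure; rewrite ?inE.
  - exact: measurableI (mT m) mD.
  - exact: measurableI (mT m) (measurable_itv _).
  - move=> y [Ty [+ _]]; rewrite /= !in_itv /= => /andP[y0 yh].
    by split => //=; rewrite yh ltW.
apply: le_trans (lee_wpmul2r _ le_mu); last by rewrite lee_fin invr_ge0 ltW ?mulr_gt0.
rewrite -EFinM lee_fin le_eqVlt; apply/orP; left; apply/eqP.
rewrite /h mulrCA mulrAC divff ?mul1r ?gt_eqF ?mulr_gt0 //.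
by rewrite (natr_odd _ oN); field; rewrite -(natr_odd _ oN) gt_eqF.
Qed.

End two_frequencies.

Theorem theorem4 (R : realType) (A B : R) (p q : nat) :
  let F := fun x : R => A * cos (p%:R * x) + B * cos (q%:R * x) in
  (0 < p)%N -> (0 < q)%N -> coprime p q -> odd (p + q) ->
  F <> (fun _ => 0) ->
  (Order.min (rho_plus F (2 * pi)) (rho_minus F (2 * pi))
     >= (1 / 2 - 1 / (2 * (p + q)%:R))%:E)%E.
Proof.
move=> F _ _ cpq oN F0.
have AB0 : (A != 0) || (B != 0).
  apply: contra_notT F0; rewrite negb_or !negbK => /andP[/eqP A0 /eqP B0].
  by apply/funext => x; rewrite /F A0 B0 !mul0r addr0.
rewrite le_min rho_minusE.
have -> : (fun x => - F x) = Fpq (- A) (- B) p q.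
  by apply/funext => x; rewrite /F /Fpq !mulNr opprD.
by rewrite !rho_plus_Fpq_ge // !oppr_eq0.
Qed.
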